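(* Let $q$ be a prime power, $1\le\ell\le q$ an integer, and $\omega_1,\omega_2\in(0,1-\ell/q)$. Let $A,B,T\subseteq\mathbb{F}_q$ each have size $\ell$, and let $X_1\sim\mathrm{Unif}(A)$, $X_2\sim\mathrm{Unif}(B)$, $Y_1\sim\mathrm{Unif}(\mathbb{F}_q\setminus A)$, $Y_2\sim\mathrm{Unif}(\mathbb{F}_q\setminus B)$ be independent. Then $$(1-\omega_1)(1-\omega_2)\Pr[X_1+X_2\in T]+\omega_1(1-\omega_2)\Pr[X_1+Y_2\in T]+\omega_2(1-\omega_1)\Pr[Y_1+X_2\in T]+\omega_1\omega_2\Pr[Y_1+Y_2\in T]$$ $$\le(1-\omega_1)(1-\omega_2)+\omega_1\omega_2\cdot\frac{\ell}{q-\ell}.$$ *)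

From HB Require Import structures.
From mathcomp Require Import all_boot all_order all_algebra all_field.
Set Implicit Arguments. Unset Strict Implicit. Unset Printing Implicit Defensive.
Import Order.TTheory GRing.Theory Num.Theory.
Local Open Scope ring_scope.

Definition unif (F : finFieldType) (R : realFieldType) (S : {set F}) (x : F) : R :=
  if x \in S then (#|S|%:R)^-1 else 0.

(* Pr[X + Y \in T] where X ~ Unif(S1), Y ~ Unif(S2) are independent:
   the joint law of (X, Y) is the product of the marginals. *)
Definition prob_sum_in (F : finFieldType) (R : realFieldType)
    (S1 S2 T : {set F}) : R :=
  \sum_(x : F) \sum_(y : F) unif R S1 x * unif R S2 y * (x + y \in T)%:R.

From HB Require Import structures.
From mathcomp Require Import all_boot all_order all_algebra all_field.
From mathcomp Require Import ring lra.
Import Order.TTheory GRing.Theory Num.Theory.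
Local Open Scope ring_scope.

(* Let a be the number of pairs (x, y) in A x B with x + y in T.  Every
   translate of T has l elements, so the other three pair counts are affine
   in a: l^2 - a for A x ~B and ~A x B, and (q - l) l - (l^2 - a) for
   ~A x ~B.  Hence the left-hand side is the right-hand side minus
   c1 c2 (l^2 - a), where c_i = (1 - w_i)/l - w_i/(q - l) >= 0 exactly when
   w_i <= 1 - l/q, and a <= l^2. *)

Section PairCount.
Variables (F : finFieldType) (R : realFieldType) (T : {set F}).

Definition pair_count (S1 S2 : {set F}) : R :=
  \sum_(x in S1) \sum_(y in S2) (x + y \in T)%:R.

Lemma sum_indicator (S : {set F}) : \sum_(y : F) ((y \in S)%:R : R) = #|S|%:R.
Proof.
rewrite -sumr_const [RHS]big_mkcond.
by apply: eq_bigr => y _; case: (y \in S).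
Qed.

Lemma sum_translate_indicator (x : F) :
  \sum_(y : F) ((x + y \in T)%:R : R) = #|T|%:R.
Proof. by rewrite -sum_indicator [RHS](reindex_inj (addrI x)). Qed.

Lemma prob_sum_inE (S1 S2 : {set F}) :
  prob_sum_in R S1 S2 T = (#|S1|%:R)^-1 * (#|S2|%:R)^-1 * pair_count S1 S2.
Proof.
rewrite /prob_sum_in /pair_count mulr_sumr [RHS]big_mkcond.
apply: eq_bigr => x _; rewrite /unif; case: (x \in S1); last first.
  by rewrite big1 // => y _; rewrite !mul0r.
rewrite mulr_sumr [RHS]big_mkcond; apply: eq_bigr => y _.
by case: (y \in S2); rewrite ?mulr0 ?mul0r // mulrA.
Qed.

Lemma pair_countC (S1 S2 : {set F}) : pair_count S1 S2 = pair_count S2 S1.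
Proof.
rewrite /pair_count exchange_big.
by under eq_bigr do under eq_bigr do rewrite addrC.
Qed.

Lemma pair_count_setT (S : {set F}) : pair_count S [set: F] = #|S|%:R * #|T|%:R.
Proof.
rewrite /pair_count -sum_indicator mulr_suml big_mkcond.
apply: eq_bigr => x _; rewrite (eq_bigl predT) => [|y]; last by rewrite in_setT.
by case: (x \in S); rewrite ?mul1r ?mul0r // sum_translate_indicator.
Qed.

Lemma pair_count_setCr (S1 S2 : {set F}) :
  pair_count S1 (~: S2) = #|S1|%:R * #|T|%:R - pair_count S1 S2.
Proof.
rewrite -pair_count_setT /pair_count -sumrB; apply: eq_bigr => x _.
by rewrite [\sum_(y in [set: F]) _](big_setID S2) setTI setTD [RHS]addrC addKr.
Qed.

Lemma pair_count_setCl (S1 S2 : {set F}) :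
  pair_count (~: S1) S2 = #|S2|%:R * #|T|%:R - pair_count S1 S2.
Proof. by rewrite pair_countC pair_count_setCr pair_countC. Qed.

Lemma pair_count_le (S1 S2 : {set F}) : pair_count S1 S2 <= #|S1|%:R * #|T|%:R.
Proof.
rewrite -subr_ge0 -pair_count_setCr.
by apply: sumr_ge0 => x _; apply: sumr_ge0 => y _; rewrite ler0n.
Qed.

End PairCount.

Lemma mixed_pair_count_bound (R : realFieldType) (L M a w1 w2 : R) :
  0 < L -> 0 < M -> a <= L * L ->
  w1 * (L + M) <= M -> w2 * (L + M) <= M ->
  (1 - w1) * (1 - w2) * (L^-1 * L^-1 * a)
  + w1 * (1 - w2) * (L^-1 * M^-1 * (L * L - a))
  + w2 * (1 - w1) * (M^-1 * L^-1 * (L * L - a))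
  + w1 * w2 * (M^-1 * M^-1 * (M * L - (L * L - a)))
  <= (1 - w1) * (1 - w2) + w1 * w2 * (L / M).
Proof.
move=> L_gt0 M_gt0 a_le w1_le w2_le.
have L_neq0 : L != 0 by rewrite gt_eqF.
have M_neq0 : M != 0 by rewrite gt_eqF.
have slope_ge0 w : w * (L + M) <= M -> 0 <= (1 - w) / L - w / M.
  move=> w_le; have -> : (1 - w) / L - w / M = (M - w * (L + M)) / (L * M).
    by field; rewrite M_neq0 L_neq0.
  by apply: divr_ge0; rewrite ?subr_ge0 // mulr_ge0 // ltW.
set c1 := (1 - w1) / L - w1 / M; set c2 := (1 - w2) / L - w2 / M.
have defect_ge0 : 0 <= c1 * c2 * (L * L - a).
  by rewrite mulr_ge0 ?subr_ge0 // mulr_ge0 // slope_ge0.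
suff -> : (1 - w1) * (1 - w2) * (L^-1 * L^-1 * a)
  + w1 * (1 - w2) * (L^-1 * M^-1 * (L * L - a))
  + w2 * (1 - w1) * (M^-1 * L^-1 * (L * L - a))
  + w1 * w2 * (M^-1 * M^-1 * (M * L - (L * L - a)))
  = (1 - w1) * (1 - w2) + w1 * w2 * (L / M) - c1 * c2 * (L * L - a).
  by rewrite lerBlDr lerDl.
by rewrite /c1 /c2; field; rewrite M_neq0 L_neq0.
Qed.

Theorem lemma4p2 (F : finFieldType) (R : realFieldType) (l : nat)
  (w1 w2 : R) (A B T : {set F}) :
  (1 <= l)%N -> (l <= #|F|)%N ->
  0 < w1 -> w1 < 1 - l%:R / #|F|%:R ->
  0 < w2 -> w2 < 1 - l%:R / #|F|%:R ->
  #|A| = l -> #|B| = l -> #|T| = l ->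
  (1 - w1) * (1 - w2) * prob_sum_in R A B T
  + w1 * (1 - w2) * prob_sum_in R A (~: B) T
  + w2 * (1 - w1) * prob_sum_in R (~: A) B T
  + w1 * w2 * prob_sum_in R (~: A) (~: B) T
  <= (1 - w1) * (1 - w2) + w1 * w2 * (l%:R / (#|F| - l)%:R).
Proof.
move=> l_gt0 l_le w1_gt0 w1_lt w2_gt0 w2_lt cardA cardB cardT.
have F_gt0 : (0 < #|F|)%N := leq_trans l_gt0 l_le.
have l_lt : (l < #|F|)%N.
  have : l%:R / #|F|%:R < 1 :> R by lra.
  by rewrite ltr_pdivrMr ?ltr0n // mul1r ltr_nat.
have cardC (S : {set F}) : #|S| = l -> #|~: S| = (#|F| - l)%N.
  by move=> cardS; rewrite cardsCs setCK cardS.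
have := pair_count_le F R T A B; rewrite cardA cardT => count_le.
rewrite !prob_sum_inE !pair_count_setCl !pair_count_setCr.
rewrite cardA cardB cardT !cardC //.
set L : R := l%:R; set M : R := (#|F| - l)%:R.
have M_gt0 : 0 < M by rewrite ltr0n subn_gt0.
have L_gt0 : 0 < L by rewrite ltr0n.
have cardF : #|F|%:R = L + M by rewrite -natrD subnKC.
have weight_le w : w < 1 - l%:R / #|F|%:R -> w * (L + M) <= M.
  rewrite cardF.
  have -> : 1 - L / (L + M) = M / (L + M) by field; rewrite gt_eqF ?addr_gt0.
  by rewrite ltr_pdivlMr ?addr_gt0 // => /ltW.
by apply: mixed_pair_count_bound; rewrite ?weight_le.
Qed.
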